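(* For any rooted binary phylogenetic tree $T$ under the $N_r$ model, $RA_{\rm MP}(T)\ge\frac1r$. Moreover, if $p_e<\frac{r-1}{r}$ for every edge $e$, then $RA_{\rm MP}(T)>\frac1r$.
   Context: A rooted binary phylogenetic tree is a finite tree with a distinguished root vertex $\rho$ of out-degree 2, all edges directed away from $\rho$, and every other vertex of in-degree 1 and out-degree 0 or 2; out-degree-0 vertices are leaves, forming the leaf set $X$. Under the Neyman $r$-state model $N_r$ ($r\ge2$) on a state set $\mathcal A$ of size $r$, each edge $e$ carries a substitution probability $p_e\in[0,\frac{r-1}{r}]$; given $F(\rho)$, states propagate independently along edges: for an edge $(u,v)$, $F(v)=F(u)$ with probability $1-p_e$, and otherwise $F(v)$ is uniform among the $r-1$ other states; $f=F|_X$. Fitch sets: each leaf $x$ gets $\{f(x)\}$; a vertex with children $v_1,v_2$ gets $\mathrm{FS}(v_1)\cap\mathrm{FS}(v_2)$ if nonempty, else the union. $\mathrm{MP}(f,T)$ is a uniformly random element of the Fitch set of $\rho$, and $RA_{\rm MP}(T)=\mathbb P(\mathrm{MP}(f,T)=\alpha\mid F(\rho)=\alpha)$. *)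

From HB Require Import structures.
From mathcomp Require Import all_boot all_order all_algebra.
Set Implicit Arguments. Unset Strict Implicit. Unset Printing Implicit Defensive.
Import Order.TTheory GRing.Theory Num.Theory.
Local Open Scope ring_scope.

(* A rooted binary tree whose edges carry substitution probabilities:
   [PNode pl tl pr tr] is a vertex with two children; [pl] is the
   substitution probability of the edge to the root of [tl], [pr] that of
   the edge to the root of [tr].  [PLeaf] is a leaf. *)
Inductive ptree (R : Type) := PLeaf | PNode of R & ptree R & R & ptree R.
Arguments PLeaf {R}.

Definition is_node R (t : ptree R) : bool :=
  if t is PNode _ _ _ _ then true else false.

Fixpoint all_edges R (P : R -> Prop) (t : ptree R) : Prop :=
  match t with
  | PLeaf => True
  | PNode pl tl pr tr => [/\ P pl, P pr, all_edges P tl & all_edges P tr]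
  end.

(* An assignment of states (in A) to all vertices of a tree. *)
Inductive ltree (A : Type) := LLeaf of A | LNode of A & ltree A & ltree A.

Definition lroot A (L : ltree A) : A :=
  match L with LLeaf a => a | LNode a _ _ => a end.

(* All state assignments F : V(t) -> A on the vertices of t (duplicate-free). *)
Fixpoint labs R (A : finType) (t : ptree R) : seq (ltree A) :=
  match t with
  | PLeaf => [seq LLeaf a | a <- enum A]
  | PNode _ tl _ tr =>
      flatten [seq [seq LNode a x y | x <- labs A tl, y <- labs A tr] | a <- enum A]
  end.

Section Nr.
Variable R : realFieldType.
Variable r : nat.

Definition trans (p : R) (a b : 'I_r) : R :=
  if a == b then 1 - p else p / (r.-1)%:R.

(* Probability of the full vertex assignment L given the root state lroot L:
   product over edges (u,v) of P(F(v) | F(u)). *)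
Fixpoint weight (t : ptree R) (L : ltree 'I_r) : R :=
  match t, L with
  | PLeaf, LLeaf _ => 1
  | PNode pl tl pr tr, LNode a x y =>
      trans pl a (lroot x) * trans pr a (lroot y) * weight tl x * weight tr y
  | _, _ => 0
  end.

(* Fitch set of the root, computed from the leaf states of L only. *)
Fixpoint fitch (L : ltree 'I_r) : {set 'I_r} :=
  match L with
  | LLeaf a => [set a]
  | LNode _ x y =>
      let S1 := fitch x in let S2 := fitch y in
      if S1 :&: S2 != set0 then S1 :&: S2 else S1 :|: S2
  end.

(* RA_MP(T) = P(MP(f,T) = alpha | F(rho) = alpha), MP(f,T) uniform on the
   Fitch set of the root. *)
Definition RA_MP (t : ptree R) (alpha : 'I_r) : R :=
  \sum_(L <- labs 'I_r t | lroot L == alpha)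
     weight t L * (if alpha \in fitch L then (#|fitch L|%:R)^-1 else 0).
End Nr.
Arguments RA_MP {R} r t alpha.

From HB Require Import structures.
From mathcomp Require Import all_boot all_order all_algebra all_fingroup.
From mathcomp Require Import ring lra.
Set Implicit Arguments. Unset Strict Implicit. Unset Printing Implicit Defensive.
Import Order.TTheory GRing.Theory Num.Theory.
Local Open Scope ring_scope.

(* Let D_a(S) be the probability that the Fitch set of the root is S when the
   root is in state a; relabelling the states is a symmetry of the model.  Fix
   b <> a and the transposition t = (a b).  By induction on the tree, D_a
   dominates its swap: D_a(t S) <= D_a(S) whenever a \in S and b \notin S.
   An edge with substitution probability p multiplies the defect
   D_a(S) - D_a(t S) by 1 - p r/(r-1) >= 0, and Fitch's merge rule keeps the
   condition because a merged set containing a but not b only arises from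
   children that never contain b without a.  As MP picks uniformly in the
   Fitch set, it returns a at least as often as any b, and these r
   probabilities add up to 1.  If every p < (r-1)/r, the singleton {a} is
   strictly more likely than {b}, which makes the inequality strict. *)

Lemma psumr_gt0 (R : numDomainType) (I : finType) (F : I -> R) j :
  (forall i, 0 <= F i) -> 0 < F j -> 0 < \sum_i F i.
Proof.
by move=> F_ge0 Fj_gt0; rewrite (bigD1 j) //= ltr_pwDl // sumr_ge0.
Qed.

Lemma sumr_mul_eq1 (R : pzSemiRingType) (I : finType) (F : I -> R) j :
  \sum_i F i * (j == i)%:R = F j.
Proof.
rewrite (bigD1 j) //= eqxx mulr1 big1 ?addr0 // => i.
by rewrite eq_sym => /negPf ->; rewrite mulr0.
Qed.

Lemma inv_card_le_max (R : numFieldType) (T : finType) (f : T -> R) a :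
  \sum_x f x = 1 -> (forall b, f b <= f a) -> #|T|%:R^-1 <= f a.
Proof.
move=> f_sum f_max; have T_gt0 : (0 < #|T|)%N by apply/card_gt0P; exists a.
rewrite -[_^-1]mulr1 ler_pdivrMl ?ltr0n //.
have -> : #|T|%:R * f a = \sum_(x : T) f a by rewrite sumr_const mulr_natl.
by rewrite -f_sum; apply: ler_sum.
Qed.

Lemma inv_card_lt_max (R : numFieldType) (T : finType) (f : T -> R) a :
  (1 < #|T|)%N -> \sum_x f x = 1 -> (forall b, b != a -> f b < f a) ->
  #|T|%:R^-1 < f a.
Proof.
move=> /card_gt1P[x [y [_ _ x_neq_y]]] f_sum f_max.
rewrite -[_^-1]mulr1 ltr_pdivrMl ?ltr0n; last by apply/card_gt0P; exists a.
have -> : #|T|%:R * f a = \sum_(x : T) f a by rewrite sumr_const mulr_natl.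
rewrite -f_sum (bigD1 a) //= [X in _ < X](bigD1 a) //=.
rewrite ltrD2l; apply: (ltr_sum _ f_max).
apply/hasP; case: (eqVneq x a) => [x_a|x_neq_a].
  by exists y; rewrite ?mem_index_enum // -x_a eq_sym.
by exists x; rewrite ?mem_index_enum.
Qed.

Section FitchMerge.
Variables (R : numDomainType) (T : finType).
Implicit Types (S X : {set T}) (Q : {set T} -> R) (a b : T).

Definition fitch_merge S1 S2 : {set T} :=
  if S1 :&: S2 != set0 then S1 :&: S2 else S1 :|: S2.

Lemma fitch_merge_imset (s : {perm T}) S1 S2 :
  fitch_merge (s @: S1) (s @: S2) = s @: fitch_merge S1 S2.
Proof.
rewrite /fitch_merge -imsetI ?imset_eq0; last by move=> x y _ _; apply: perm_inj.
by case: ifP => _ //; rewrite imsetU.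
Qed.

Lemma fitch_merge_eq0 S1 S2 : fitch_merge S1 S2 = set0 -> S1 = set0.
Proof.
rewrite /fitch_merge; case: ifP => [/negP I_neq0 I_eq0|_ /eqP].
  by rewrite I_eq0 eqxx in I_neq0.
by rewrite setU_eq0 => /andP[/eqP].
Qed.

Lemma fitch_merge_sep a b S1 S2 :
  a \in fitch_merge S1 S2 -> b \notin fitch_merge S1 S2 ->
  ((b \in S1) ==> (a \in S1)) && ((b \in S2) ==> (a \in S2)).
Proof.
rewrite /fitch_merge; case: ifP => _; rewrite !inE;
  by case: (a \in S1); case: (a \in S2); case: (b \in S1); case: (b \in S2).
Qed.

Lemma mem_imset_tperm a b S x : (x \in tperm a b @: S) = (tperm a b x \in S).
Proof. by rewrite -{1}(tpermK a b x) mem_imset //; apply: perm_inj. Qed.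

Lemma imset_tpermK a b : involutive (fun S => tperm a b @: S).
Proof. by move=> S; apply/setP => x; rewrite !mem_imset_tperm tpermK. Qed.

Lemma imset_tperm_id a b S : (a \in S) = (b \in S) -> tperm a b @: S = S.
Proof.
by move=> ab_S; apply/setP => x; rewrite mem_imset_tperm; case: tpermP => [->|->|].
Qed.

Lemma imset_tperm_set1 a b : tperm a b @: [set a] = [set b].
Proof. by rewrite imset_set1 tpermL. Qed.

Definition swap_dominant Q a b :=
  forall S, a \in S -> b \notin S -> Q (tperm a b @: S) <= Q S.

Lemma swap_dominantW Q a b S :
  swap_dominant Q a b -> (b \in S) ==> (a \in S) -> Q (tperm a b @: S) <= Q S.
Proof.
move=> Q_dom; case aS: (a \in S); case bS: (b \in S) => //= _.
- by rewrite imset_tperm_id ?aS ?bS.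
- by apply: Q_dom; rewrite ?aS ?bS.
- by rewrite imset_tperm_id ?aS ?bS.
Qed.

Definition merge_dist Q1 Q2 S : R :=
  \sum_S1 \sum_S2 Q1 S1 * Q2 S2 * (fitch_merge S1 S2 == S)%:R.

Lemma eq_merge_dist Q1 Q1' Q2 Q2' :
  Q1 =1 Q1' -> Q2 =1 Q2' -> merge_dist Q1 Q2 =1 merge_dist Q1' Q2'.
Proof.
move=> eQ1 eQ2 S; apply: eq_bigr => S1 _; apply: eq_bigr => S2 _.
by rewrite eQ1 eQ2.
Qed.

Lemma sum_merge_dist Q1 Q2 (H : {set T} -> R) :
  \sum_S merge_dist Q1 Q2 S * H S =
  \sum_S1 \sum_S2 Q1 S1 * Q2 S2 * H (fitch_merge S1 S2).
Proof.
under eq_bigr => S _ do rewrite mulr_suml; rewrite exchange_big.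
apply: eq_bigr => S1 _; under eq_bigr => S _ do rewrite mulr_suml.
rewrite exchange_big; apply: eq_bigr => S2 _.
rewrite -(sumr_mul_eq1 (fun S => Q1 S1 * Q2 S2 * H S)).
by apply: eq_bigr => S _; rewrite mulrAC.
Qed.

Lemma merge_dist_imset (s : {perm T}) Q1 Q2 S :
  merge_dist Q1 Q2 (s @: S) =
  merge_dist (fun X => Q1 (s @: X)) (fun X => Q2 (s @: X)) S.
Proof.
have s_inj := imset_inj (@perm_inj _ s).
rewrite /merge_dist (reindex_inj s_inj); apply: eq_bigr => S1 _.
rewrite (reindex_inj s_inj); apply: eq_bigr => S2 _.
by rewrite fitch_merge_imset (inj_eq s_inj).
Qed.

Lemma merge_dist_set0 Q1 Q2 : Q1 set0 = 0 -> merge_dist Q1 Q2 set0 = 0.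
Proof.
move=> Q1_set0; apply: big1 => S1 _; apply: big1 => S2 _.
by case: eqP => [/fitch_merge_eq0 ->|_]; rewrite ?Q1_set0 ?mulr0 ?mul0r.
Qed.

Section Dominance.
Variables (Q1 Q2 : {set T} -> R) (a b : T).
Hypotheses (Q1_ge0 : forall X, 0 <= Q1 X) (Q2_ge0 : forall X, 0 <= Q2 X).
Hypotheses (Q1_dom : swap_dominant Q1 a b) (Q2_dom : swap_dominant Q2 a b).

Lemma merge_dist_ge0 S : 0 <= merge_dist Q1 Q2 S.
Proof. by rewrite sumr_ge0 // => S1 _; rewrite sumr_ge0 // => S2 _; rewrite !mulr_ge0. Qed.

Lemma merge_dist_swap_sub S :
  merge_dist Q1 Q2 S - merge_dist Q1 Q2 (tperm a b @: S) =
  \sum_S1 \sum_S2 (Q1 S1 * Q2 S2 - Q1 (tperm a b @: S1) * Q2 (tperm a b @: S2))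
                    * (fitch_merge S1 S2 == S)%:R.
Proof.
rewrite merge_dist_imset -sumrB; apply: eq_bigr => S1 _.
by rewrite -sumrB; apply: eq_bigr => S2 _; rewrite mulrBl.
Qed.

Lemma merge_swap_term_ge0 S S1 S2 : a \in S -> b \notin S ->
  0 <= (Q1 S1 * Q2 S2 - Q1 (tperm a b @: S1) * Q2 (tperm a b @: S2))
         * (fitch_merge S1 S2 == S)%:R.
Proof.
move=> aS bS; case: eqP => [merge_S|_]; last by rewrite mulr0.
rewrite mulr1 subr_ge0; rewrite -merge_S in aS bS.
have /andP[sep1 sep2] := fitch_merge_sep aS bS.
by apply: ler_pM => //; apply: swap_dominantW.
Qed.

Lemma merge_dist_dominant : swap_dominant (merge_dist Q1 Q2) a b.
Proof.
move=> S aS bS; rewrite -subr_ge0 merge_dist_swap_sub.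
by rewrite sumr_ge0 // => S1 _; rewrite sumr_ge0 // => S2 _; apply: merge_swap_term_ge0.
Qed.

Lemma merge_dist_swap_lt : a != b ->
  Q1 [set b] < Q1 [set a] -> Q2 [set b] < Q2 [set a] ->
  merge_dist Q1 Q2 [set b] < merge_dist Q1 Q2 [set a].
Proof.
move=> a_neq_b lt1 lt2; have aS : a \in [set a] by rewrite set11.
have bS : b \notin [set a] by rewrite inE eq_sym.
rewrite -subr_gt0 -{1}(imset_tperm_set1 a b) merge_dist_swap_sub.
apply: (psumr_gt0 _ (j := [set a])) => [S1|].
  by rewrite sumr_ge0 // => S2 _; apply: merge_swap_term_ge0.
apply: (psumr_gt0 _ (j := [set a])) => [S2|]; first exact: merge_swap_term_ge0.
have -> : fitch_merge [set a] [set a] = [set a].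
  by rewrite /fitch_merge setIid setUid; case: ifP.
by rewrite eqxx mulr1 imset_tperm_set1 subr_gt0 ltr_pM.
Qed.

End Dominance.

End FitchMerge.

Section MPChoice.
Variables (R : numFieldType) (T : finType).
Implicit Types (S : {set T}) (D : {set T} -> R) (a b x : T).

Definition mp_share x S : R := if x \in S then #|S|%:R^-1 else 0.

Definition mp_prob D x := \sum_S D S * mp_share x S.

Lemma sum_mp_prob D : D set0 = 0 -> \sum_x mp_prob D x = \sum_S D S.
Proof.
move=> D_set0; rewrite exchange_big; apply: eq_bigr => S _.
rewrite -mulr_sumr /mp_share -big_mkcond /= sumr_const.
have [->|/eqP S_neq0] := eqVneq S set0; first by rewrite D_set0 !mul0r.
by rewrite -[X in _ * X]mulr_natr mulVf ?mulr1 // pnatr_eq0 cards_eq0; apply/eqP.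
Qed.

Lemma mp_share_tperm a b S :
  mp_share a (tperm a b @: S) = mp_share b S /\ mp_share b (tperm a b @: S) = mp_share a S.
Proof.
by rewrite /mp_share !mem_imset_tperm tpermL tpermR card_imset //; apply: perm_inj.
Qed.

Lemma mp_prob_sub_double D a b :
  (mp_prob D a - mp_prob D b) *+ 2 =
  \sum_S (D S - D (tperm a b @: S)) * (mp_share a S - mp_share b S).
Proof.
have sub_E : mp_prob D a - mp_prob D b = \sum_S D S * (mp_share a S - mp_share b S).
  by rewrite -sumrB; apply: eq_bigr => S _; rewrite mulrBr.
rewrite mulr2n sub_E {2}(reindex_inj (imset_inj (@perm_inj _ (tperm a b)))) /=.
rewrite -big_split /=; apply: eq_bigr => S _.
have [-> ->] := mp_share_tperm a b S; ring.
Qed.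

Lemma mp_swap_term_ge0 D a b S : swap_dominant D a b ->
  0 <= (D S - D (tperm a b @: S)) * (mp_share a S - mp_share b S).
Proof.
rewrite /mp_share => D_dom; case aS: (a \in S); case bS: (b \in S).
- by rewrite subrr mulr0.
- by rewrite subr0 mulr_ge0 ?invr_ge0 ?ler0n // subr_ge0 D_dom ?aS ?bS.
- rewrite sub0r mulr_le0 // ?oppr_le0 ?invr_ge0 ?ler0n // subr_le0.
  have := D_dom (tperm a b @: S).
  by rewrite !mem_imset_tperm tpermL tpermR aS bS imset_tpermK; apply.
- by rewrite subrr mulr0.
Qed.

Lemma mp_prob_le D a b : swap_dominant D a b -> mp_prob D b <= mp_prob D a.
Proof.
move=> D_dom; rewrite -subr_ge0 -(pmulrn_lge0 _ (isT : (0 < 2)%N)).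
by rewrite mp_prob_sub_double sumr_ge0 // => S _; apply: mp_swap_term_ge0.
Qed.

Lemma mp_prob_lt D a b : swap_dominant D a b -> a != b ->
  D [set b] < D [set a] -> mp_prob D b < mp_prob D a.
Proof.
move=> D_dom a_neq_b lt_ab; rewrite -subr_gt0 -(pmulrn_lgt0 _ (isT : (0 < 2)%N)).
rewrite mp_prob_sub_double (psumr_gt0 _ (j := [set a])) // => [S|].
  exact: mp_swap_term_ge0.
rewrite imset_tperm_set1 /mp_share !inE eqxx eq_sym (negbTE a_neq_b).
by rewrite cards1 invr1 subr0 mulr1 subr_gt0.
Qed.

End MPChoice.
Arguments mp_share {R T}.

Section Neyman.
Variables (R : realFieldType) (r : nat).
Implicit Types (S X : {set 'I_r}) (a b c : 'I_r) (p : R) (t : ptree R).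
Implicit Types (D : 'I_r -> {set 'I_r} -> R).

Local Notation sat := ((r.-1)%:R / r%:R : R).

Definition edge_push p D a S := \sum_b trans p a b * D b S.

Fixpoint fitch_dist t a : {set 'I_r} -> R :=
  match t with
  | PLeaf => fun S => (S == [set a])%:R
  | PNode pl tl pr tr =>
      merge_dist (edge_push pl (fitch_dist tl) a) (edge_push pr (fitch_dist tr) a)
  end.

(* The non-trivial eigenvalue of the N_r transition matrix. *)
Definition neyman_eigen p := 1 - p - p / (r.-1)%:R.

Lemma edge_push_perm (s : {perm 'I_r}) p D a S :
  (forall b X, D (s b) (s @: X) = D b X) ->
  edge_push p D (s a) (s @: S) = edge_push p D a S.
Proof.
move=> D_perm; rewrite /edge_push (reindex_inj (@perm_inj _ s)) /=.
by apply: eq_bigr => b _; rewrite D_perm /trans (inj_eq perm_inj).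
Qed.

Lemma fitch_dist_perm (s : {perm 'I_r}) t a S :
  fitch_dist t (s a) (s @: S) = fitch_dist t a S.
Proof.
elim: t a S => [|pl tl IHl pr tr IHr] a S /=.
  by rewrite -imset_set1 (inj_eq (imset_inj (@perm_inj _ s))).
by rewrite merge_dist_imset; apply: eq_merge_dist => X; apply: edge_push_perm.
Qed.

Lemma edge_push_swap_sub p D a b S : a != b ->
  (forall c X, D (tperm a b c) (tperm a b @: X) = D c X) ->
  edge_push p D a S - edge_push p D a (tperm a b @: S) =
  neyman_eigen p * (D a S - D a (tperm a b @: S)).
Proof.
move=> a_neq_b D_swap; rewrite /edge_push -sumrB (bigD1 a) //= (bigD1 b) 1?eq_sym //=.
rewrite big1 ?addr0 => [|c /andP[c_neq_b c_neq_a]]; last first.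
  have -> : D c (tperm a b @: S) = D c S.
    by rewrite -{1}(tpermD (x := a) (y := b) (z := c)) 1?eq_sym // D_swap.
  by rewrite subrr.
have DbS : D b S = D a (tperm a b @: S).
  by rewrite -{1}(tpermL a b) -{1}(imset_tpermK a b S) D_swap.
have DbtS : D b (tperm a b @: S) = D a S by rewrite -{1}(tpermL a b) D_swap.
rewrite DbS DbtS /trans /neyman_eigen eqxx (negbTE a_neq_b); ring.
Qed.

Section Positivity.
Hypothesis r_gt1 : (1 < r)%N.

Lemma pred_r_gt0 : 0 < (r.-1)%:R :> R.
Proof. by rewrite ltr0n; case: (r) r_gt1 => [|[|n]]. Qed.

Lemma natr_r : r%:R = (r.-1)%:R + 1 :> R.
Proof. by rewrite natr1 prednK // ltnW. Qed.

Lemma natr_r_gt0 : 0 < r%:R :> R.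
Proof. by rewrite ltr0n ltnW. Qed.

Lemma le_sat_mulr p : p <= sat -> p * ((r.-1)%:R + 1) <= (r.-1)%:R.
Proof. by rewrite -natr_r -ler_pdivlMr // natr_r_gt0. Qed.

Lemma lt_sat_mulr p : p < sat -> p * ((r.-1)%:R + 1) < (r.-1)%:R.
Proof. by rewrite -natr_r -ltr_pdivlMr // natr_r_gt0. Qed.

Lemma neyman_eigen_ge0 p : 0 <= p <= sat -> 0 <= neyman_eigen p.
Proof.
move=> /andP[p_ge0 /le_sat_mulr p_le]; have m_gt0 := pred_r_gt0.
have : p / (r.-1)%:R * (r.-1)%:R = p by rewrite divfK // gt_eqF.
rewrite /neyman_eigen; nra.
Qed.

Lemma neyman_eigen_gt0 p : 0 <= p -> p < sat -> 0 < neyman_eigen p.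
Proof.
move=> p_ge0 /lt_sat_mulr p_lt; have m_gt0 := pred_r_gt0.
have : p / (r.-1)%:R * (r.-1)%:R = p by rewrite divfK // gt_eqF.
rewrite /neyman_eigen; nra.
Qed.

Lemma trans_ge0 p a b : 0 <= p <= sat -> 0 <= trans p a b.
Proof.
move=> /andP[p_ge0 /le_sat_mulr p_le]; have m_gt0 := pred_r_gt0.
rewrite /trans; case: eqP => _; last by rewrite divr_ge0 // ltW.
rewrite subr_ge0; nra.
Qed.

Lemma sum_trans p a : \sum_b trans p a b = 1.
Proof.
rewrite (bigD1 a) //= /trans eqxx.
rewrite (eq_bigr (fun=> p / (r.-1)%:R)) => [|b]; last by rewrite eq_sym => /negbTE ->.
rewrite sumr_const cardC1 card_ord -[X in _ + X]mulr_natr divfK ?subrK //.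
by rewrite gt_eqF // pred_r_gt0.
Qed.

Lemma edge_push_mass p D a :
  (forall b, \sum_S D b S = 1) -> \sum_S edge_push p D a S = 1.
Proof.
move=> D_mass; rewrite exchange_big /= -(sum_trans p a); apply: eq_bigr => b _.
by rewrite -mulr_sumr D_mass mulr1.
Qed.

Lemma fitch_dist_mass t a : \sum_S fitch_dist t a S = 1.
Proof.
elim: t a => [|pl tl IHl pr tr IHr] a /=.
  by rewrite (bigD1 [set a]) //= eqxx big1 ?addr0 // => S /negPf ->.
under eq_bigr => S _ do rewrite -[merge_dist _ _ _]mulr1.
rewrite sum_merge_dist; under eq_bigr => S1 _ do under eq_bigr => S2 _ do rewrite mulr1.
by rewrite -big_distrlr /= !edge_push_mass ?mulr1.
Qed.

Lemma edge_push_ge0 p D a S :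
  0 <= p <= sat -> (forall b X, 0 <= D b X) -> 0 <= edge_push p D a S.
Proof.
by move=> p_ok D_ge0; rewrite sumr_ge0 // => b _; rewrite mulr_ge0 ?trans_ge0.
Qed.

Section EdgeSwap.
Variables (p : R) (D : 'I_r -> {set 'I_r} -> R) (a b : 'I_r).
Hypothesis a_neq_b : a != b.
Hypothesis D_swap : forall c X, D (tperm a b c) (tperm a b @: X) = D c X.

Lemma edge_push_dominant : 0 <= p <= sat ->
  swap_dominant (D a) a b -> swap_dominant (edge_push p D a) a b.
Proof.
move=> p_ok D_dom S aS bS; rewrite -subr_ge0 edge_push_swap_sub //.
by rewrite mulr_ge0 ?neyman_eigen_ge0 // subr_ge0 D_dom.
Qed.

Lemma edge_push_swap_lt : 0 <= p -> p < sat ->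
  D a [set b] < D a [set a] -> edge_push p D a [set b] < edge_push p D a [set a].
Proof.
move=> p_ge0 p_lt lt_ab; rewrite -subr_gt0 -(imset_tperm_set1 a b) edge_push_swap_sub //.
by rewrite mulr_gt0 ?neyman_eigen_gt0 // imset_tperm_set1 subr_gt0.
Qed.

End EdgeSwap.

Lemma fitch_dist_ge0 t a S : all_edges (fun p => 0 <= p <= sat) t -> 0 <= fitch_dist t a S.
Proof.
elim: t a S => [|pl tl IHl pr tr IHr] a S /=; first by rewrite ler0n.
case=> pl_ok pr_ok tl_ok tr_ok.
by apply: merge_dist_ge0 => X; apply: edge_push_ge0 => // c Y; [apply: IHl | apply: IHr].
Qed.

Lemma fitch_dist_dominant t a b : a != b ->
  all_edges (fun p => 0 <= p <= sat) t -> swap_dominant (fitch_dist t a) a b.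
Proof.
move=> a_neq_b; elim: t a b a_neq_b => [|pl tl IHl pr tr IHr] a b a_neq_b /=.
  move=> _ S aS bS; case: eqP => [tS_a|_]; last by rewrite ler_nat.
  by move: bS; rewrite -(imset_tpermK a b S) tS_a imset_tperm_set1 set11.
case=> pl_ok pr_ok tl_ok tr_ok.
apply: merge_dist_dominant.
- by move=> X; apply: edge_push_ge0 => // *; apply: fitch_dist_ge0.
- by move=> X; apply: edge_push_ge0 => // *; apply: fitch_dist_ge0.
- by apply: edge_push_dominant => //; [apply: fitch_dist_perm | apply: IHl].
- by apply: edge_push_dominant => //; [apply: fitch_dist_perm | apply: IHr].
Qed.

Lemma fitch_dist_swap_lt t a b : a != b ->
  all_edges (fun p => 0 <= p <= sat) t -> all_edges (fun p => p < sat) t ->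
  fitch_dist t a [set b] < fitch_dist t a [set a].
Proof.
move=> a_neq_b; elim: t => [|pl tl IHl pr tr IHr] /=.
  by rewrite eqxx (inj_eq set1_inj) eq_sym (negbTE a_neq_b) ltr_nat.
case=> pl_ok pr_ok tl_ok tr_ok [pl_lt pr_lt tl_lt tr_lt].
have [/andP[pl_ge0 _] /andP[pr_ge0 _]] := (pl_ok, pr_ok).
apply: merge_dist_swap_lt => //.
- by move=> X; apply: edge_push_ge0 => // *; apply: fitch_dist_ge0.
- by move=> X; apply: edge_push_ge0 => // *; apply: fitch_dist_ge0.
- by apply: edge_push_dominant => //; [apply: fitch_dist_perm | apply: fitch_dist_dominant].
- by apply: edge_push_dominant => //; [apply: fitch_dist_perm | apply: fitch_dist_dominant].
- by apply: edge_push_swap_lt => //; [apply: fitch_dist_perm | apply: IHl].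
- by apply: edge_push_swap_lt => //; [apply: fitch_dist_perm | apply: IHr].
Qed.

End Positivity.

Lemma fitch_dist_set0 t a : fitch_dist t a set0 = 0.
Proof.
elim: t a => [|pl tl IHl pr tr IHr] a /=.
  by case: eqP => // /setP /(_ a); rewrite !inE eqxx.
by apply: merge_dist_set0; apply: big1 => b _; rewrite IHl mulr0.
Qed.

Lemma sum_weight_edge t p a (F : {set 'I_r} -> R) :
  (forall G : 'I_r -> {set 'I_r} -> R,
     \sum_(L <- labs 'I_r t) weight t L * G (lroot L) (fitch L) =
     \sum_b \sum_S fitch_dist t b S * G b S) ->
  \sum_(L <- labs 'I_r t) weight t L * (trans p a (lroot L) * F (fitch L)) =
  \sum_S edge_push p (fitch_dist t) a S * F S.
Proof.
move=> t_sum; rewrite (t_sum (fun c S => trans p a c * F S)) exchange_big.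
by apply: eq_bigr => S _; rewrite mulr_suml; apply: eq_bigr => b _; rewrite mulrCA mulrA.
Qed.

Lemma sum_weight_fitch t (G : 'I_r -> {set 'I_r} -> R) :
  \sum_(L <- labs 'I_r t) weight t L * G (lroot L) (fitch L) =
  \sum_b \sum_S fitch_dist t b S * G b S.
Proof.
elim: t G => [|pl tl IHl pr tr IHr] G /=.
  rewrite big_map big_enum; apply: eq_bigr => b _.
  rewrite mul1r -(sumr_mul_eq1 (G b) [set b]).
  by apply: eq_bigr => S _; rewrite mulrC eq_sym.
rewrite big_flatten big_map big_enum; apply: eq_bigr => a _.
rewrite big_allpairs_dep /= sum_merge_dist.
transitivity (\sum_(x <- labs 'I_r tl) weight tl x * (trans pl a (lroot x) *
  \sum_(y <- labs 'I_r tr) weight tr y *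
    (trans pr a (lroot y) * G a (fitch_merge (fitch x) (fitch y))))).
  apply: eq_bigr => x _; rewrite !mulr_sumr; apply: eq_bigr => y _.
  by rewrite /fitch_merge; set g := G a _; ring.
under eq_bigr => x _ do
  rewrite (sum_weight_edge pr a (fun S2 => G a (fitch_merge (fitch x) S2)) IHr).
rewrite (sum_weight_edge pl a (fun S1 => \sum_S2 edge_push pr (fitch_dist tr) a S2 *
                                            G a (fitch_merge S1 S2)) IHl).
by apply: eq_bigr => S1 _; rewrite mulr_sumr; apply: eq_bigr => S2 _; rewrite mulrA.
Qed.

Lemma RA_MP_mp_prob t a : RA_MP r t a = mp_prob (fitch_dist t a) a.
Proof.
rewrite /RA_MP big_mkcond /=.
pose G b S : R := (b == a)%:R * mp_share a S.
rewrite (eq_bigr (fun L => weight t L * G (lroot L) (fitch L))) => [|L _]; last first.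
  by rewrite /G; case: eqP => _; rewrite ?mul1r ?mul0r ?mulr0.
rewrite sum_weight_fitch (bigD1 a) //= [X in _ + X]big1 ?addr0 => [|b b_neq_a].
  by apply: eq_bigr => S _; rewrite /G eqxx mul1r.
by apply: big1 => S _; rewrite /G (negbTE b_neq_a) mul0r mulr0.
Qed.

End Neyman.

(* The argument also covers a tree reduced to a leaf. *)
Theorem corollary3 (R : realFieldType) (r : nat) (T : ptree R) (alpha : 'I_r) :
  (2 <= r)%N ->
  is_node T ->
  all_edges (fun p : R => 0 <= p <= (r.-1)%:R / r%:R) T ->
  (r%:R)^-1 <= RA_MP r T alpha /\
  (all_edges (fun p : R => p < (r.-1)%:R / r%:R) T ->
   (r%:R)^-1 < RA_MP r T alpha).
Proof.
move=> r_gt1 _ T_ok; rewrite RA_MP_mp_prob; set D := fitch_dist T alpha.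
have D_sum : \sum_x mp_prob D x = 1.
  by rewrite sum_mp_prob /D ?fitch_dist_set0 // fitch_dist_mass.
split.
  have := inv_card_le_max D_sum; rewrite card_ord; apply=> b.
  have [-> //|b_neq_alpha] := eqVneq b alpha.
  by apply/mp_prob_le/fitch_dist_dominant; rewrite // eq_sym.
move=> T_lt; have := inv_card_lt_max (a := alpha) _ D_sum; rewrite card_ord; apply=> // b.
rewrite eq_sym => alpha_neq_b.
by apply: mp_prob_lt => //; [apply: fitch_dist_dominant | apply: fitch_dist_swap_lt].
Qed.
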